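(* Let $s\ge0$ be a constant, let $K_s=\frac{1+\sqrt{2}}{3}-\frac{\sqrt{4+2\sqrt{2}}}{4}+\frac{2-\sqrt{2}}{6}s$ and $\epsilon_0=\frac{2-\sqrt2}{6}$. Let $(M,g)$ be a complete oriented four-dimensional Einstein manifold with nonnegative sectional curvature and $\mathrm{Ric}=g$, such that $K_{ik}+sK_{ij}\ge K_s$ for every orthonormal basis $\{e_i\}$ of every tangent space and all distinct $i,j,k$ with $K_{ik}\ge K_{ij}$. Fix $o\in M$ and a Berger basis at $o$ (see context), with $a_1,a_2,a_3,c_1,c_2,c_3,I$ defined from it as in the context, and suppose the minimal sectional curvature at $o$ satisfies $K_{12}\le \epsilon_0-\epsilon$ for a constant $\epsilon>0$. Then: (1) if $a_2\ge0$ and $c_2\ge0$, then $I>\frac83\epsilon$; (2) if $a_2<0$ or $c_2<0$, then $I>\epsilon$.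
   Context: Curvature conventions: $R_{ijkl}=R(e_i,e_j,e_k,e_l)$ with $K_{ij}=R_{ijij}$ the sectional curvature of the plane spanned by $e_i,e_j$. A Berger basis at $o$ is a positively oriented orthonormal basis $\{e_i\}$ of $T_oM$ such that: (1) $K_{12}=\min\{K(\pi):\pi\subset T_oM\}$; (2) $K_{14}=\max\{K(\pi):\pi\subset T_oM\}$; (3) $R_{ikjk}=0$ for all $i\ne j$; (4) $|R_{1342}-R_{1234}|\le K_{13}-K_{12}$, $|R_{1423}-R_{1342}|\le K_{14}-K_{13}$, $|R_{1423}-R_{1234}|\le K_{14}-K_{12}$ (such a basis exists at every point of an oriented Einstein four-manifold, by Berger). Define $a_1=2(K_{12}+R_{1234})$, $a_2=2(K_{13}+R_{1342})$, $a_3=2(K_{14}+R_{1423})$, $c_1=2(K_{12}-R_{1234})$, $c_2=2(K_{13}-R_{1342})$, $c_3=2(K_{14}-R_{1423})$; these are the eigenvalues of the curvature operator restricted to self-dual and anti-self-dual 2-forms respectively, with $a_1\le a_2\le a_3$ and $c_1\le c_2\le c_3$. Define $$I=(c_2-c_1)c_3+(c_3-c_1)c_2+(a_2-a_1)a_3+(a_3-a_1)a_2 .$$ *)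

From HB Require Import structures.
From mathcomp Require Import all_boot all_order all_algebra.
From mathcomp Require Import reals.
Set Implicit Arguments. Unset Strict Implicit. Unset Printing Implicit Defensive.
Import Order.TTheory GRing.Theory Num.Theory.
Local Open Scope ring_scope.

Section Curv.
Variable R : realType.

(* A (0,4)-tensor on T_oM = R^4 (with g = Euclidean inner product),
   given by its components in the standard orthonormal frame. *)
Definition tensor4 := 'I_4 -> 'I_4 -> 'I_4 -> 'I_4 -> R.

Definition Rten (Rm : tensor4) (u v w z : 'rV[R]_4) : R :=
  \sum_(i < 4) \sum_(j < 4) \sum_(k < 4) \sum_(l < 4)
     u 0 i * v 0 j * w 0 k * z 0 l * Rm i j k l.

Definition dot (u v : 'rV[R]_4) : R := \sum_(i < 4) u 0 i * v 0 i.

Definition orthonormal2 (u v : 'rV[R]_4) : Prop :=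
  dot u u = 1 /\ dot v v = 1 /\ dot u v = 0.

(* sectional curvature of the plane spanned by an orthonormal pair u, v *)
Definition sec (Rm : tensor4) (u v : 'rV[R]_4) : R := Rten Rm u v u v.

Definition is_curvature_tensor (Rm : tensor4) : Prop :=
  forall i j k l,
    Rm i j k l = - Rm j i k l /\ Rm i j k l = - Rm i j l k /\
    Rm i j k l = Rm k l i j /\ Rm i j k l + Rm j k i l + Rm k i j l = 0.

Definition einstein_ric_eq_g (Rm : tensor4) : Prop :=
  forall i j : 'I_4, \sum_(k < 4) Rm i k j k = (i == j)%:R.

Definition nonneg_sec (Rm : tensor4) : Prop :=
  forall u v, orthonormal2 u v -> 0 <= sec Rm u v.

(* orthonormal bases: rows of E are e_1, ..., e_4 *)
Definition orthonormal_basis (E : 'M[R]_4) : Prop := E *m E^T = 1%:M.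

Definition Rc (Rm : tensor4) (E : 'M[R]_4) (i j k l : 'I_4) : R :=
  Rten Rm (row i E) (row j E) (row k E) (row l E).

Definition Kc (Rm : tensor4) (E : 'M[R]_4) (i j : 'I_4) : R := Rc Rm E i j i j.

(* paper indices 1,2,3,4 correspond to 0,1,2,3 *)
Definition i1 : 'I_4 := inord 0.
Definition i2 : 'I_4 := inord 1.
Definition i3 : 'I_4 := inord 2.
Definition i4 : 'I_4 := inord 3.

Definition Ks (s : R) : R :=
  (1 + Num.sqrt 2) / 3 - Num.sqrt (4 + 2 * Num.sqrt 2) / 4 + (2 - Num.sqrt 2) / 6 * s.

Definition eps0 : R := (2 - Num.sqrt 2) / 6.

Definition pinched (s : R) (Rm : tensor4) : Prop :=
  forall E : 'M[R]_4, orthonormal_basis E ->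
  forall i j k : 'I_4, i != j -> j != k -> i != k ->
    Kc Rm E i j <= Kc Rm E i k -> Ks s <= Kc Rm E i k + s * Kc Rm E i j.

Definition berger_basis (Rm : tensor4) (E : 'M[R]_4) : Prop :=
  [/\ orthonormal_basis E /\ 0 < \det E,
      (forall u v, orthonormal2 u v -> Kc Rm E i1 i2 <= sec Rm u v),
      (forall u v, orthonormal2 u v -> sec Rm u v <= Kc Rm E i1 i4),
      (forall i j k : 'I_4, i != j -> Rc Rm E i k j k = 0) &
      [/\ `|Rc Rm E i1 i3 i4 i2 - Rc Rm E i1 i2 i3 i4| <= Kc Rm E i1 i3 - Kc Rm E i1 i2,
          `|Rc Rm E i1 i4 i2 i3 - Rc Rm E i1 i3 i4 i2| <= Kc Rm E i1 i4 - Kc Rm E i1 i3 &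
          `|Rc Rm E i1 i4 i2 i3 - Rc Rm E i1 i2 i3 i4| <= Kc Rm E i1 i4 - Kc Rm E i1 i2]].

Definition a1 Rm E : R := 2 * (Kc Rm E i1 i2 + Rc Rm E i1 i2 i3 i4).
Definition a2 Rm E : R := 2 * (Kc Rm E i1 i3 + Rc Rm E i1 i3 i4 i2).
Definition a3 Rm E : R := 2 * (Kc Rm E i1 i4 + Rc Rm E i1 i4 i2 i3).
Definition c1 Rm E : R := 2 * (Kc Rm E i1 i2 - Rc Rm E i1 i2 i3 i4).
Definition c2 Rm E : R := 2 * (Kc Rm E i1 i3 - Rc Rm E i1 i3 i4 i2).
Definition c3 Rm E : R := 2 * (Kc Rm E i1 i4 - Rc Rm E i1 i4 i2 i3).

Definition Iq Rm E : R :=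
  (c2 Rm E - c1 Rm E) * c3 Rm E + (c3 Rm E - c1 Rm E) * c2 Rm E
  + (a2 Rm E - a1 Rm E) * a3 Rm E + (a3 Rm E - a1 Rm E) * a2 Rm E.

End Curv.

From mathcomp Require Import all_boot all_order all_algebra.
From mathcomp Require Import reals.
From mathcomp Require Import ring lra.
Import Order.TTheory GRing.Theory Num.Theory.
Local Open Scope ring_scope.
Set Implicit Arguments. Unset Strict Implicit.

(* With x, y, z = K12, K13, K14 (summing to 1 by the Einstein condition) and
   p, q, r = R1234, R1342, R1423 (summing to 0 by the Bianchi identity),
   I = 16 y z - 8 x (1 - x) + 8/3 Q(q - p, r - q) for the indefinite form
   Q(d1, d2) = 2 d1^2 + 2 d1 d2 - d2^2, and Berger's inequalities
   |q - p| <= y - x, |r - q| <= z - y bound Q from below.  The pinching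
   hypothesis, applied in the Berger frame and in the frame rotated by pi/4 in
   the (e2, e3)-plane, gives x + y >= (4 + sqrt 2)/6 - sqrt (4 + 2 sqrt 2)/4. *)

Definition qform {R : realFieldType} (d1 d2 : R) : R := 2 * d1 ^+ 2 + 2 * d1 * d2 - d2 ^+ 2.

Lemma qform_ge_corner {R : realFieldType} (d1 d2 u w : R) :
  `|d1| <= u -> `|d2| <= w -> 2 * u <= w -> qform u (- w) <= qform d1 d2.
Proof.
move=> d1_le d2_le uw.
have d1d2_ge : - (`|d1| * `|d2|) <= d1 * d2.
  by rewrite lerNl -normrM -normrN ler_norm.
rewrite /qform -[d1 ^+ 2]real_normK ?num_real // -[d2 ^+ 2]real_normK ?num_real //.
have n1 := normr_ge0 d1; have n2 := normr_ge0 d2.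
move: (`|d1|) (`|d2|) d1_le d2_le d1d2_ge n1 n2 => e D d1_le d2_le d1d2_ge n1 n2.
have [hD|hD] := lerP (2 * u) D.
- have ue_ge0 : 0 <= (u - e) * (D - e - u) by apply: mulr_ge0; lra.
  have wD_ge0 : 0 <= (w - D) * (w + D + 2 * u) by apply: mulr_ge0; lra.
  nra.
- have eD_sq_ge0 : 0 <= (2 * e - D) ^+ 2 by apply: sqr_ge0.
  have wu_ge0 : 0 <= (w - 2 * u) * (w + 4 * u) by apply: mulr_ge0; lra.
  have D_sq_le : D ^+ 2 <= 4 * u ^+ 2 by nra.
  nra.
Qed.

(* The minimum over [d1] is attained at [d1 = - d2 / 2]. *)
Lemma qform_ge {R : realFieldType} (d1 d2 w : R) :
  `|d2| <= w -> - (3 / 2) * w ^+ 2 <= qform d1 d2.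
Proof.
rewrite ler_norml => /andP[d2_ge d2_le].
have d_sq_ge0 : 0 <= (2 * d1 + d2) ^+ 2 by apply: sqr_ge0.
have wd_ge0 : 0 <= (w - d2) * (w + d2) by apply: mulr_ge0; lra.
rewrite /qform; nra.
Qed.

Definition Iform {R : realFieldType} (x y z p q r : R) : R :=
  (2 * (y - q) - 2 * (x - p)) * (2 * (z - r)) + (2 * (z - r) - 2 * (x - p)) * (2 * (y - q))
  + (2 * (y + q) - 2 * (x + p)) * (2 * (z + r)) + (2 * (z + r) - 2 * (x + p)) * (2 * (y + q)).

Lemma IformE {R : realFieldType} (x y z p q r : R) : x + y + z = 1 -> p + q + r = 0 ->
  Iform x y z p q r = 16 * y * z - 8 * x * (1 - x) + 8 / 3 * qform (q - p) (r - q).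
Proof.
move=> xyz pqr.
have -> : z = 1 - x - y by lra.
have -> : r = - p - q by lra.
by rewrite /Iform /qform; field.
Qed.

(* If [s <= 1] the second hypothesis suffices, otherwise the first one with [x <= e0]. *)
Lemma sum_ge_of_pinching {R : realFieldType} (s x y K0 e0 : R) :
  0 <= s -> x <= e0 -> e0 <= K0 ->
  K0 + e0 * s <= y + s * x -> K0 + e0 * s <= (x + y) / 2 + s * ((x + y) / 2) ->
  K0 + e0 <= x + y.
Proof.
move=> s_ge0 x_le e0_le pinch1 pinch2.
have [s_le1|s_gt1] := lerP s 1.
- have sK_ge0 : 0 <= (1 - s) * (K0 - e0) by apply: mulr_ge0; lra.
  rewrite leNgt; apply/negP => sum_lt.
  have sK_gt0 : 0 < (1 + s) * (K0 + e0 - (x + y)) by apply: mulr_gt0; lra.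
  nra.
- have sx_ge0 : 0 <= (s - 1) * (e0 - x) by apply: mulr_ge0; lra.
  nra.
Qed.

Lemma Iform_poly_ge_gap_le {R : realFieldType} {a b x y z : R} :
  a ^+ 2 = 2 -> b ^+ 2 = 4 + 2 * a ->
  141 / 100 <= a <= 142 / 100 -> 261 / 100 <= b <= 262 / 100 ->
  0 <= x -> x <= (2 - a) / 6 -> (4 + a) / 6 - b / 4 <= x + y ->
  x <= y -> y <= z -> x + y + z = 1 -> 2 * (y - x) <= z - y ->
  3 * ((2 - a) / 6 - x) <= 16 * y * z - 8 * x * (1 - x) + 8 / 3 * qform (y - x) (- (z - y)).
Proof.
move=> a_sq b_sq /andP[a_ge a_le] /andP[b_ge b_le] x_ge0 x_le sum_ge xy yz xyz gap_le.
have y_le : 4 * y <= 1 + x by lra.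
have y_le' : 2 * y <= 1 - x by lra.
have ez : z = 1 - x - y by lra.
subst z; clear xyz gap_le yz.
set t := (2 - a) / 6 - x; set v := x + y - ((4 + a) / 6 - b / 4).
have ex : x = (2 - a) / 6 - t by rewrite /t; ring.
have ey : y = (4 + a) / 6 - b / 4 + v - (2 - a) / 6 + t by rewrite /v /t; ring.
have t_ge0 : 0 <= t by rewrite /t; lra.
have v_ge0 : 0 <= v by rewrite /v; lra.
have v_le : v <= 13 / 100 by rewrite /v; lra.
have ta_ge0 : 0 <= t * (a - 141 / 100) by apply: mulr_ge0; lra.
have tb_ge0 : 0 <= t * (262 / 100 - b) by apply: mulr_ge0; lra.
have vb_ge0 : 0 <= v * (b - 261 / 100) by apply: mulr_ge0; lra.
have vv_ge0 : 0 <= v * (13 / 100 - v) by apply: mulr_ge0; lra.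
have tv_ge0 : 0 <= t * v by apply: mulr_ge0.
have tt_ge0 : 0 <= t * t by apply: mulr_ge0.
rewrite /qform ex ey; nra.
Qed.

Lemma Iform_poly_ge_gap_gt {R : realFieldType} {a x y z : R} : 141 / 100 <= a ->
  0 <= x -> x <= (2 - a) / 6 -> y <= z -> x + y + z = 1 -> z - y < 2 * (y - x) ->
  3 * ((2 - a) / 6 - x) <= 16 * y * z - 8 * x * (1 - x) - 4 * (z - y) ^+ 2.
Proof.
move=> a_ge x_ge0 x_le yz xyz gap_gt.
have ez : z = 1 - x - y by lra.
subst z.
have y_mid_ge0 : 0 <= (y - (1 + x) / 4) * ((1 - x) / 2 - y) by apply: mulr_ge0; lra.
have x_small_ge0 : 0 <= x * (1 / 10 - x) by apply: mulr_ge0; lra.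
nra.
Qed.

Lemma Iform_ge {R : realFieldType} {a b x y z p q r : R} :
  a ^+ 2 = 2 -> b ^+ 2 = 4 + 2 * a ->
  141 / 100 <= a <= 142 / 100 -> 261 / 100 <= b <= 262 / 100 ->
  0 <= x -> x <= (2 - a) / 6 -> (4 + a) / 6 - b / 4 <= x + y ->
  x <= y -> y <= z -> x + y + z = 1 -> p + q + r = 0 ->
  `|q - p| <= y - x -> `|r - q| <= z - y ->
  3 * ((2 - a) / 6 - x) <= Iform x y z p q r.
Proof.
move=> a_sq b_sq a_bounds b_bounds x_ge0 x_le sum_ge xy yz xyz pqr d1_le d2_le.
rewrite IformE //.
have [gap_le|gap_gt] := lerP (2 * (y - x)) (z - y).
- have : qform (y - x) (- (z - y)) <= qform (q - p) (r - q) by exact: qform_ge_corner.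
  have := Iform_poly_ge_gap_le a_sq b_sq a_bounds b_bounds x_ge0 x_le sum_ge xy yz xyz gap_le.
  lra.
- have /andP[a_ge _] := a_bounds.
  have : - (3 / 2) * (z - y) ^+ 2 <= qform (q - p) (r - q) by exact: qform_ge.
  have := Iform_poly_ge_gap_gt a_ge x_ge0 x_le yz xyz gap_gt.
  lra.
Qed.

Lemma sum3_rot (V : nmodType) (n : nat) (F : 'I_n -> 'I_n -> 'I_n -> V) :
  \sum_(j < n) \sum_(k < n) \sum_(l < n) F j k l =
  \sum_(j < n) \sum_(k < n) \sum_(l < n) F k l j.
Proof.
by rewrite [RHS]exchange_big /=; apply: eq_bigr => k _; rewrite exchange_big.
Qed.

Lemma sum_I4 (V : nmodType) (F : 'I_4 -> V) :
  \sum_(k < 4) F k = F i1 + F i2 + F i3 + F i4.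
Proof.
rewrite !big_ord_recl big_ord0 addr0 !addrA.
by congr (F _ + F _ + F _ + F _); apply: val_inj; rewrite /= inordK.
Qed.

Lemma i12 : i1 != i2. Proof. by rewrite -val_eqE /= !inordK. Qed.
Lemma i13 : i1 != i3. Proof. by rewrite -val_eqE /= !inordK. Qed.
Lemma i23 : i2 != i3. Proof. by rewrite -val_eqE /= !inordK. Qed.

Lemma sqrt2_bounds (R : rcfType) : 141 / 100 <= Num.sqrt (2 : R) <= 142 / 100.
Proof.
have a_ge0 := sqrtr_ge0 (2 : R).
have a_sq : Num.sqrt (2 : R) ^+ 2 = 2 by rewrite sqr_sqrtr.
move: (Num.sqrt 2) a_ge0 a_sq => a a_ge0 a_sq.
by apply/andP; split; rewrite leNgt; apply/negP => ?; nra.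
Qed.

Lemma sqrt_4_2sqrt2_bounds (R : rcfType) :
  261 / 100 <= Num.sqrt (4 + 2 * Num.sqrt (2 : R)) <= 262 / 100.
Proof.
have /andP[a_ge a_le] := sqrt2_bounds R.
have b_ge0 := sqrtr_ge0 (4 + 2 * Num.sqrt (2 : R)).
have b_sq : Num.sqrt (4 + 2 * Num.sqrt (2 : R)) ^+ 2 = 4 + 2 * Num.sqrt 2.
  by rewrite sqr_sqrtr //; lra.
move: (Num.sqrt (4 + _)) b_ge0 b_sq => b b_ge0 b_sq.
by apply/andP; split; rewrite leNgt; apply/negP => ?; nra.
Qed.

Lemma orthonormal_basis_mul (R : realType) (A B : 'M[R]_4) :
  orthonormal_basis A -> orthonormal_basis B -> orthonormal_basis (A *m B).
Proof.
rewrite /orthonormal_basis => AAT BBT.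
by rewrite trmx_mul mulmxA -(mulmxA A) BBT mulmx1 AAT.
Qed.

Section CurvatureTensor.
Variable R : realType.
Implicit Types (u v w z : 'rV[R]_4) (E : 'M[R]_4).

Lemma dot_row_orthonormal E i j : orthonormal_basis E ->
  dot (row i E) (row j E) = (i == j)%:R.
Proof.
move=> E_on; have := congr1 (fun M : 'M[R]_4 => M i j) E_on; rewrite /= !mxE => <-.
by apply: eq_bigr => k _; rewrite !mxE.
Qed.

Definition rot23 (c s : R) : 'M[R]_4 := \matrix_(i, j)
  match nat_of_ord i, nat_of_ord j with
  | 0, 0 | 3, 3 => 1
  | 1, 1 | 2, 2 => c
  | 1, 2 => s
  | 2, 1 => - s
  | _, _ => 0
  end.

Lemma rot23_orthonormal (c s : R) :
  c ^+ 2 + s ^+ 2 = 1 -> orthonormal_basis (rot23 c s).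
Proof.
move=> cs; apply/matrixP => i j; rewrite !mxE sum_I4 !mxE /i1 /i2 /i3 /i4 !inordK //.
by case: i => [[|[|[|[|?]]]] ?] //; case: j => [[|[|[|[|?]]]] ?] //=; lra.
Qed.

Lemma rows_rot23_mul (c s : R) E :
  [/\ row i1 (rot23 c s *m E) = row i1 E,
      row i2 (rot23 c s *m E) = c *: row i2 E + s *: row i3 E &
      row i3 (rot23 c s *m E) = (- s) *: row i2 E + c *: row i3 E].
Proof.
by split; apply/rowP => k; rewrite !mxE sum_I4 !mxE /i1 /i2 /i3 /i4 !inordK //=; lra.
Qed.

Lemma KsE (s : R) : Ks s = Ks 0 + eps0 R * s.
Proof. by rewrite /Ks /eps0 mulr0 addr0. Qed.

Lemma Ks0_add_eps0 :
  Ks 0 + eps0 R = (4 + Num.sqrt 2) / 6 - Num.sqrt (4 + 2 * Num.sqrt 2) / 4.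
Proof. by rewrite /Ks /eps0 mulr0 addr0; field. Qed.

Lemma eps0_le_Ks0 : eps0 R <= Ks 0.
Proof.
have /andP[a_ge a_le] := sqrt2_bounds R.
have /andP[b_ge b_le] := sqrt_4_2sqrt2_bounds R.
by rewrite /Ks /eps0; lra.
Qed.

Variable Rm : tensor4 R.

Lemma IqE E : Iq Rm E = Iform (Kc Rm E i1 i2) (Kc Rm E i1 i3) (Kc Rm E i1 i4)
  (Rc Rm E i1 i2 i3 i4) (Rc Rm E i1 i3 i4 i2) (Rc Rm E i1 i4 i2 i3).
Proof. by []. Qed.

Lemma Kc_ge0 E i j : nonneg_sec Rm -> orthonormal_basis E -> i != j -> 0 <= Kc Rm E i j.
Proof.
move=> Rm_nneg E_on ij; apply: Rm_nneg.
by rewrite /orthonormal2 !dot_row_orthonormal // !eqxx (negPf ij).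
Qed.

Lemma Rten_linear2 u v1 v2 w z (c1 c2 : R) :
  Rten Rm u (c1 *: v1 + c2 *: v2) w z = c1 * Rten Rm u v1 w z + c2 * Rten Rm u v2 w z.
Proof.
rewrite /Rten !mulr_sumr -big_split /=; apply: eq_bigr => i _.
rewrite !mulr_sumr -big_split /=; apply: eq_bigr => j _.
rewrite !mulr_sumr -big_split /=; apply: eq_bigr => k _.
rewrite !mulr_sumr -big_split /=; apply: eq_bigr => l _.
by rewrite !mxE; ring.
Qed.

Lemma Rten_linear4 u v w z1 z2 (c1 c2 : R) :
  Rten Rm u v w (c1 *: z1 + c2 *: z2) = c1 * Rten Rm u v w z1 + c2 * Rten Rm u v w z2.
Proof.
rewrite /Rten !mulr_sumr -big_split /=; apply: eq_bigr => i _.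
rewrite !mulr_sumr -big_split /=; apply: eq_bigr => j _.
rewrite !mulr_sumr -big_split /=; apply: eq_bigr => k _.
rewrite !mulr_sumr -big_split /=; apply: eq_bigr => l _.
by rewrite !mxE; ring.
Qed.

Hypothesis Rm_curv : is_curvature_tensor Rm.

Lemma RtenN12 u v w z : Rten Rm u v w z = - Rten Rm v u w z.
Proof.
rewrite /Rten [in RHS]exchange_big /= -sumrN; apply: eq_bigr => i _.
rewrite -sumrN; apply: eq_bigr => j _.
rewrite -sumrN; apply: eq_bigr => k _.
rewrite -sumrN; apply: eq_bigr => l _.
by have [-> _] := Rm_curv i j k l; ring.
Qed.

Lemma RtenN34 u v w z : Rten Rm u v w z = - Rten Rm u v z w.
Proof.
rewrite /Rten -sumrN; apply: eq_bigr => i _.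
rewrite -sumrN; apply: eq_bigr => j _.
rewrite [in RHS]exchange_big /= -sumrN; apply: eq_bigr => k _.
rewrite -sumrN; apply: eq_bigr => l _.
by have [_ [-> _]] := Rm_curv i j k l; ring.
Qed.

Lemma Rten_swap_pairs u v w z : Rten Rm u v w z = Rten Rm v u z w.
Proof. by rewrite RtenN12 RtenN34 opprK. Qed.

Lemma Rten_bianchi u v w z :
  Rten Rm u v w z + Rten Rm u w z v + Rten Rm u z v w = 0.
Proof.
rewrite /Rten -!big_split /= big1 // => i _.
rewrite [X in _ + X + _]sum3_rot [X in _ + _ + X]sum3_rot [X in _ + _ + X]sum3_rot.
rewrite -!big_split /= big1 // => j _.
rewrite -!big_split /= big1 // => k _.
rewrite -!big_split /= big1 // => l _.
have [Nkij _] := Rm_curv k i j l.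
have [_ [Nikj _]] := Rm_curv i k j l.
have [_ [_ [Sjki _]]] := Rm_curv j k i l.
have [_ [_ [_ Bijk]]] := Rm_curv i j k l.
have cyc : Rm i j k l + Rm i k l j + Rm i l j k = 0 by lra.
transitivity (u 0 i * v 0 j * w 0 k * z 0 l * (Rm i j k l + Rm i k l j + Rm i l j k)).
  by ring.
by rewrite cyc mulr0.
Qed.

Lemma Kc_rot23 E (c s : R) :
  (forall i j k : 'I_4, i != j -> Rc Rm E i k j k = 0) ->
  Kc Rm (rot23 c s *m E) i1 i2 = c ^+ 2 * Kc Rm E i1 i2 + s ^+ 2 * Kc Rm E i1 i3 /\
  Kc Rm (rot23 c s *m E) i1 i3 = s ^+ 2 * Kc Rm E i1 i2 + c ^+ 2 * Kc Rm E i1 i3.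
Proof.
move=> cross.
have R1213 : Rten Rm (row i1 E) (row i2 E) (row i1 E) (row i3 E) = 0.
  by rewrite Rten_swap_pairs; apply: cross i23.
have R1312 : Rten Rm (row i1 E) (row i3 E) (row i1 E) (row i2 E) = 0.
  by rewrite Rten_swap_pairs; apply: cross; rewrite eq_sym i23.
rewrite /Kc /Rc; have [-> -> ->] := rows_rot23_mul c s E.
rewrite !Rten_linear2 !Rten_linear4 R1213 R1312.
by split; ring.
Qed.

(* The rotation by pi/4 in the (e2, e3)-plane turns K12 and K13 into their mean. *)
Lemma pinched_sum_ge s E : 0 <= s -> pinched s Rm -> orthonormal_basis E ->
  (forall i j k : 'I_4, i != j -> Rc Rm E i k j k = 0) ->
  Kc Rm E i1 i2 <= Kc Rm E i1 i3 -> Kc Rm E i1 i2 <= eps0 R ->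
  Ks 0 + eps0 R <= Kc Rm E i1 i2 + Kc Rm E i1 i3.
Proof.
move=> s_ge0 pinch E_on cross xy x_le.
pose h := Num.sqrt (1 / 2 : R).
have h_sq : h ^+ 2 = 1 / 2 by rewrite sqr_sqrtr // divr_ge0.
have rot_on : orthonormal_basis (rot23 h h *m E).
  by apply: orthonormal_basis_mul E_on; apply: rot23_orthonormal; rewrite h_sq; lra.
have [K'12 K'13] := Kc_rot23 h h cross.
have mid : h ^+ 2 * Kc Rm E i1 i2 + h ^+ 2 * Kc Rm E i1 i3
           = (Kc Rm E i1 i2 + Kc Rm E i1 i3) / 2 by rewrite h_sq; ring.
rewrite mid in K'12 K'13.
apply: (sum_ge_of_pinching s_ge0 x_le eps0_le_Ks0); rewrite -KsE.
- exact: pinch E_on i1 i2 i3 i12 i23 i13 xy.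
- by have := pinch _ rot_on i1 i2 i3 i12 i23 i13; rewrite K'12 K'13; apply.
Qed.

Lemma Kc_diag E i : Kc Rm E i i = 0.
Proof. by have := RtenN12 (row i E) (row i E) (row i E) (row i E); rewrite /Kc /Rc; lra. Qed.

Hypothesis Rm_einstein : einstein_ric_eq_g Rm.

(* The Einstein condition is stated in the standard frame; E^T E = 1 transfers
   it to the frame E. *)
Lemma Rten_trace E u w : orthonormal_basis E ->
  \sum_(m < 4) Rten Rm u (row m E) w (row m E) = dot u w.
Proof.
move=> E_on; have ETE : E^T *m E = 1%:M by apply: mulmx1C.
rewrite /Rten exchange_big /=; apply: eq_bigr => i _.
rewrite exchange_big /=.
transitivity (\sum_(j < 4) \sum_(k < 4) u 0 i * w 0 k * \sum_(l < 4) Rm i j k l * (j == l)%:R).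
  apply: eq_bigr => j _; rewrite exchange_big /=; apply: eq_bigr => k _.
  rewrite exchange_big /= mulr_sumr; apply: eq_bigr => l _.
  have := congr1 (fun M : 'M[R]_4 => M j l) ETE; rewrite /= !mxE => <-.
  by rewrite !mulr_sumr; apply: eq_bigr => m _; rewrite !mxE; ring.
transitivity (\sum_(k < 4) u 0 i * w 0 k * (i == k)%:R).
  rewrite exchange_big /=; apply: eq_bigr => k _.
  rewrite -mulr_sumr; congr (_ * _); rewrite -(Rm_einstein i k); apply: eq_bigr => j _.
  rewrite (bigD1 j) //= eqxx mulr1 big1 ?addr0 // => l /negPf; rewrite eq_sym => ->.
  by rewrite mulr0.
rewrite (bigD1 i) //= eqxx mulr1 big1 ?addr0 // => k /negPf; rewrite eq_sym => ->.
by rewrite mulr0.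
Qed.

Lemma Kc_row_sum E i : orthonormal_basis E -> \sum_(k < 4) Kc Rm E i k = 1.
Proof. by move=> E_on; rewrite /Kc /Rc (Rten_trace _ _ E_on) dot_row_orthonormal // eqxx. Qed.

End CurvatureTensor.

Theorem lemma4p1 (R : realType) (s : R) (Rm : tensor4 R) (E : 'M[R]_4) (eps : R) :
  0 <= s ->
  is_curvature_tensor Rm ->
  einstein_ric_eq_g Rm ->
  nonneg_sec Rm ->
  pinched s Rm ->
  berger_basis Rm E ->
  0 < eps ->
  Kc Rm E i1 i2 <= eps0 R - eps ->
  ((0 <= a2 Rm E /\ 0 <= c2 Rm E -> 8 / 3 * eps < Iq Rm E) /\
   (a2 Rm E < 0 \/ c2 Rm E < 0 -> eps < Iq Rm E)).
Proof.
move=> s_ge0 Rm_curv Rm_ein Rm_nneg Rm_pinch [[E_on _] _ _ cross [d1_le d2_le _]] eps_gt0 x_le.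
have x_ge0 := Kc_ge0 Rm_nneg E_on i12.
have x_le_eps0 : Kc Rm E i1 i2 <= eps0 R by lra.
have xy : Kc Rm E i1 i2 <= Kc Rm E i1 i3 by rewrite -subr_ge0 (le_trans _ d1_le).
have yz : Kc Rm E i1 i3 <= Kc Rm E i1 i4 by rewrite -subr_ge0 (le_trans _ d2_le).
have xyz : Kc Rm E i1 i2 + Kc Rm E i1 i3 + Kc Rm E i1 i4 = 1.
  by have := Kc_row_sum Rm_ein i1 E_on; rewrite sum_I4 Kc_diag // add0r.
have pqr : Rc Rm E i1 i2 i3 i4 + Rc Rm E i1 i3 i4 i2 + Rc Rm E i1 i4 i2 i3 = 0.
  exact: Rten_bianchi.
have sum_ge := pinched_sum_ge Rm_curv s_ge0 Rm_pinch E_on cross xy x_le_eps0.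
rewrite Ks0_add_eps0 in sum_ge.
have a_sq : Num.sqrt (2 : R) ^+ 2 = 2 by rewrite sqr_sqrtr.
have b_sq : Num.sqrt (4 + 2 * Num.sqrt (2 : R)) ^+ 2 = 4 + 2 * Num.sqrt 2.
  by rewrite sqr_sqrtr // addr_ge0 // mulr_ge0 // sqrtr_ge0.
have I_ge : 3 * (eps0 R - Kc Rm E i1 i2) <= Iq Rm E.
  by rewrite IqE; apply: (Iform_ge a_sq b_sq (sqrt2_bounds R) (sqrt_4_2sqrt2_bounds R)).
by split=> _; lra.
Qed.
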